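(* Consider the two-SP new-spectrum model described in the context, let $a=N_f\lambda_S^{1/\alpha-1}$ and $T=\frac{(B_1^o+B_2^o)a}{N_m}$. 1. If $B>T$, then $\mathrm{SW}_{\mathrm{w}}^{\mathrm{NE}}\le\mathrm{SW}_{\mathrm{w}}^{*}<\mathrm{SW}_{\mathrm{wo}}^{*}$, and $\mathrm{SW}_{\mathrm{w}}^{\mathrm{NE}}=\mathrm{SW}_{\mathrm{w}}^{*}$ if and only if, for both $i=1,2$, $$\lambda_S(R_S^0)^{-\alpha}-(R_M^0)^{-\alpha}-\frac{\alpha\lambda_S^2B_i^nR_0}{N_f}(R_S^0)^{-\alpha-1}+\frac{\alpha B_i^oR_0}{N_m}(R_M^0)^{-\alpha-1}\le0,$$ where $R_S^0=\frac{\lambda_S(B_1^n+B_2^n)R_0}{N_f}$ and $R_M^0=\frac{(B_1^o+B_2^o)R_0}{N_m}$. 2. If $B\le T$, then $\mathrm{SW}_{\mathrm{w}}^{\mathrm{NE}}\le\mathrm{SW}_{\mathrm{w}}^{*}=\mathrm{SW}_{\mathrm{wo}}^{*}$, and $\mathrm{SW}_{\mathrm{w}}^{\mathrm{NE}}=\mathrm{SW}_{\mathrm{w}}^{*}=\mathrm{SW}_{\mathrm{wo}}^{*}$ if and only if $$B_1^n\in\Big[B-\frac{B_2^oa}{N_m},\ \frac{B_1^oa}{N_m}\Big],\qquad B_2^n=B-B_1^n.$$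
   Context: Two service providers (SPs) $i=1,2$. SP $i$ has an initial licensed bandwidth $B_i^o>0$ and receives a share $B_i^n\ge0$ of newly available bandwidth $B>0$, with $B_1^n+B_2^n=B$. SP $i$'s total bandwidth is $B_i=B_i^o+B_i^n$, which it splits into macro-cell bandwidth $B_{i,M}\ge0$ and small-cell bandwidth $B_{i,S}$ with $B_{i,M}+B_{i,S}\le B_i$; the new bandwidth may only be used in small-cells, which is imposed as the regulatory constraint $B_{i,S}\ge B_{i,S}^0:=B_i^n$. Parameters: $R_0>0$, $\lambda_S>1$, a mass $N_m>0$ of mobile users (served only by macro-cells) and a mass $N_f>0$ of fixed users, each with utility $u(r)=r^{1-\alpha}/(1-\alpha)$, $\alpha\in(0,1)$. Second-stage prices are market-clearing: with $R_M=\frac{(B_{1,M}+B_{2,M})R_0}{N_m}$ and $R_S=\frac{\lambda_S(B_{1,S}+B_{2,S})R_0}{N_f}$, prices are $R_M^{-\alpha}$ (macro) and $R_S^{-\alpha}$ (small), mobile users receive rate $R_M$ and fixed users rate $R_S$. SP $i$'s payoff in the bandwidth game is $S_i=\lambda_SB_{i,S}R_0R_S^{-\alpha}+B_{i,M}R_0R_M^{-\alpha}$. Social welfare is $\mathrm{SW}=N_mu(R_M)+N_fu(R_S)$. For a given split $(B_1^n,B_2^n)$: $\mathrm{SW}_{\mathrm{wo}}^{*}$ is the maximal social welfare over all bandwidth allocations without the regulatory constraints (equal to the equilibrium social welfare of the unconstrained game); $\mathrm{SW}_{\mathrm{w}}^{*}$ is the maximal social welfare over all bandwidth allocations satisfying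 the regulatory constraints $B_{i,S}\ge B_i^n$; and $\mathrm{SW}_{\mathrm{w}}^{\mathrm{NE}}$ is the social welfare at the (unique) Nash equilibrium of the bandwidth game with the regulatory constraints. *)

From HB Require Import structures.
From mathcomp Require Import all_boot all_order all_algebra.
From mathcomp Require Import all_classical all_reals all_analysis.
Set Implicit Arguments. Unset Strict Implicit. Unset Printing Implicit Defensive.
Import Order.TTheory GRing.Theory Num.Theory.
Local Open Scope classical_set_scope.
Local Open Scope ring_scope.

Section Model.
Variable R : realType.

Record alloc := Alloc { BM1 : R; BS1 : R; BM2 : R; BS2 : R }.

Definition util (al r : R) : R := r `^ (1 - al) / (1 - al).

Definition rateM (R0 Nm X : R) : R := X * R0 / Nm.
Definition rateS (R0 lamS Nf Y : R) : R := lamS * Y * R0 / Nf.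

Definition RM_of (R0 Nm : R) (p : alloc) : R := rateM R0 Nm (BM1 p + BM2 p).
Definition RS_of (R0 lamS Nf : R) (p : alloc) : R :=
  rateS R0 lamS Nf (BS1 p + BS2 p).

Definition SW (al R0 lamS Nm Nf : R) (p : alloc) : R :=
  Nm * util al (RM_of R0 Nm p) + Nf * util al (RS_of R0 lamS Nf p).

(* payoffs S_1, S_2 (market-clearing prices R_M^-alpha, R_S^-alpha) *)
Definition payoff1 (al R0 lamS Nm Nf : R) (p : alloc) : R :=
  lamS * BS1 p * R0 * (RS_of R0 lamS Nf p) `^ (- al)
  + BM1 p * R0 * (RM_of R0 Nm p) `^ (- al).
Definition payoff2 (al R0 lamS Nm Nf : R) (p : alloc) : R :=
  lamS * BS2 p * R0 * (RS_of R0 lamS Nf p) `^ (- al)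
  + BM2 p * R0 * (RM_of R0 Nm p) `^ (- al).

(* Lb = 0 : no regulatory constraint;  Lb = B_i^n : with the constraint. *)
Definition player_feasible (Bi Lb bm bs : R) : Prop :=
  0 <= bm /\ Lb <= bs /\ bm + bs <= Bi.

Definition alloc_feasible (B1 L1 B2 L2 : R) (p : alloc) : Prop :=
  player_feasible B1 L1 (BM1 p) (BS1 p) /\ player_feasible B2 L2 (BM2 p) (BS2 p).

Definition SW_wo_opt (al R0 lamS Nm Nf Bo1 Bo2 Bn1 Bn2 : R) : R :=
  sup [set x | exists p, alloc_feasible (Bo1 + Bn1) 0 (Bo2 + Bn2) 0 p /\
                         SW al R0 lamS Nm Nf p = x].

Definition SW_w_opt (al R0 lamS Nm Nf Bo1 Bo2 Bn1 Bn2 : R) : R :=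
  sup [set x | exists p, alloc_feasible (Bo1 + Bn1) Bn1 (Bo2 + Bn2) Bn2 p /\
                         SW al R0 lamS Nm Nf p = x].

Definition is_NE_w (al R0 lamS Nm Nf Bo1 Bo2 Bn1 Bn2 : R) (p : alloc) : Prop :=
  alloc_feasible (Bo1 + Bn1) Bn1 (Bo2 + Bn2) Bn2 p /\
  (forall bm bs, player_feasible (Bo1 + Bn1) Bn1 bm bs ->
     payoff1 al R0 lamS Nm Nf (Alloc bm bs (BM2 p) (BS2 p))
       <= payoff1 al R0 lamS Nm Nf p) /\
  (forall bm bs, player_feasible (Bo2 + Bn2) Bn2 bm bs ->
     payoff2 al R0 lamS Nm Nf (Alloc (BM1 p) (BS1 p) bm bs)
       <= payoff2 al R0 lamS Nm Nf p).

Definition a_const (al lamS Nf : R) : R := Nf * lamS `^ (al^-1 - 1).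
Definition T_thr (al lamS Nm Nf Bo1 Bo2 : R) : R :=
  (Bo1 + Bo2) * a_const al lamS Nf / Nm.

Definition RS0 (R0 lamS Nf Bn1 Bn2 : R) : R := lamS * (Bn1 + Bn2) * R0 / Nf.
Definition RM0 (R0 Nm Bo1 Bo2 : R) : R := (Bo1 + Bo2) * R0 / Nm.

Definition cond_i (al R0 lamS Nm Nf Bo1 Bo2 Bn1 Bn2 Bni Boi : R) : Prop :=
  lamS * (RS0 R0 lamS Nf Bn1 Bn2) `^ (- al) - (RM0 R0 Nm Bo1 Bo2) `^ (- al)
  - al * lamS ^+ 2 * Bni * R0 / Nf * (RS0 R0 lamS Nf Bn1 Bn2) `^ (- al - 1)
  + al * Boi * R0 / Nm * (RM0 R0 Nm Bo1 Bo2) `^ (- al - 1) <= 0.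

End Model.

From HB Require Import structures.
From mathcomp Require Import all_boot all_order all_algebra.
From mathcomp Require Import all_classical all_reals all_analysis.
From mathcomp Require Import ring lra.
Import Order.TTheory GRing.Theory Num.Theory.
Import numFieldNormedType.Exports.
Local Open Scope classical_set_scope.
Local Open Scope ring_scope.

(* With a := N_f lambda_S^(1/alpha - 1), bandwidth in small cells
   is worth exactly as much as macro bandwidth shared by a mobile users:
   lambda_S R_S^-alpha = (R_0 Y / a)^-alpha and N_f u(R_S) = a u(R_0 Y / a),
   where Y is the total small-cell bandwidth.  Social welfare is therefore the
   strictly concave function N_m u(R_0 X / N_m) + a u(R_0 Y / a) of the macro
   and small totals X and Y.  Without regulation it is maximal at a X = N_m Y,
   X + Y = B^o + B; the constraint Y >= B binds exactly when this Y is below B,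
   i.e. when B > T, and then the optimum is the corner (X, Y) = (B^o, B).
   At a Nash equilibrium every SP uses all its bandwidth, some macro bandwidth
   is used, and each SP satisfies the first-order conditions of its concave
   payoff: the gain from shifting bandwidth from macro to small cells is >= 0
   if it holds more than B_i^n in small cells and <= 0 if it holds macro
   bandwidth.  Adding up these conditions shows that small-cell bandwidth is
   never worth more than macro bandwidth, and that when it is worth less one SP
   sits at its corner (B_i^n, B_i^o) while the other still wants more small
   cells; comparing with the optimum gives both characterizations. *)

(** * Tangent inequalities for power functions *)

Section PowerTangents.
Context {R : realType}.
Implicit Types r x y z : R.

Lemma ltr_powR_neg {r x y} : r < 0 -> 0 < x -> x < y -> y `^ r < x `^ r.
Proof.
move=> r_lt0 x_gt0 xy; have y_gt0 : 0 < y by apply: lt_trans xy.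
have powRNN u : u `^ r = (u `^ (- r))^-1 by rewrite -powRN opprK.
rewrite !(powRNN x, powRNN y) ltf_pV2 ?posrE ?powR_gt0 //.
by apply: (gt0_ltr_powR _ _ _ xy); rewrite ?oppr_gt0 // nnegrE ltW.
Qed.

Lemma ler_powR_neg {r x y} : r < 0 -> 0 < x -> x <= y -> y `^ r <= x `^ r.
Proof.
move=> r_lt0 x_gt0; rewrite le_eqVlt => /predU1P[-> //|xy].
exact/ltW/ltr_powR_neg.
Qed.

Lemma ltr_powR_negE r x y : r < 0 -> 0 < x -> 0 < y -> (y `^ r < x `^ r) = (x < y).
Proof.
move=> r_lt0 x_gt0 y_gt0; apply/idP/idP; last exact: ltr_powR_neg.
by apply: contraTT; rewrite -!leNgt; exact: ler_powR_neg.
Qed.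

Lemma powRB1 r x : 0 < x -> x `^ (r - 1) = x `^ r / x.
Proof.
move=> x_gt0; rewrite powRB ?powRr1 ?ltW //.
by apply/implyP => _; rewrite gt_eqF.
Qed.

(* By the mean value theorem, d = (c^(r-1) - z0^(r-1)) (z - z0) for some c
   strictly between z0 and z, and c^(r-1) is decreasing since r < 1. *)
Lemma powR_tangent_gap {r z0 z} : r < 1 -> 0 < z0 -> 0 < z -> z != z0 ->
  exists2 d, d < 0 & z `^ r - (z0 `^ r + r * z0 `^ (r - 1) * (z - z0)) = r * d.
Proof.
move=> r_lt1 z0_gt0 z_gt0 z_neq.
have mvt u v : 0 < u -> u < v ->
    exists2 c, u < c < v & v `^ r - u `^ r = r * c `^ (r - 1) * (v - u).
  move=> u_gt0 uv.
  have := @MVT R (fun y => y `^ r) (fun y => r * y `^ (r - 1)) u v uv; case.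
  - by move=> x; rewrite in_itv /= => /andP[ux _]; apply: is_derive1_powR; lra.
  - apply: derivable_within_continuous => x; rewrite in_itv /= => /andP[ux _].
    by apply: derivable_powR; rewrite in_itv /= andbT; lra.
  - by move=> c; rewrite in_itv /= => cuv ->; exists c.
have r1_lt0 : r - 1 < 0 by lra.
have [zz0|z0z|zz0] := ltgtP z z0; last by rewrite zz0 eqxx in z_neq.
- have [c /andP[zc cz0] E] := mvt z z0 z_gt0 zz0.
  exists ((c `^ (r - 1) - z0 `^ (r - 1)) * (z - z0)).
    by have := ltr_powR_neg r1_lt0 (lt_trans z_gt0 zc) cz0; nra.
  have -> : z `^ r = z0 `^ r - (z0 `^ r - z `^ r) by ring.
  rewrite E; ring.
- have [c /andP[z0c cz] E] := mvt z0 z z0_gt0 z0z.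
  exists ((c `^ (r - 1) - z0 `^ (r - 1)) * (z - z0)).
    by have := ltr_powR_neg r1_lt0 z0_gt0 z0c; nra.
  have -> : z `^ r = z0 `^ r + (z `^ r - z0 `^ r) by ring.
  rewrite E; ring.
Qed.

Lemma powR_lt_tangent {r z0 z} : 0 < r -> r < 1 -> 0 < z0 -> 0 <= z -> z != z0 ->
  z `^ r < z0 `^ r + r * z0 `^ (r - 1) * (z - z0).
Proof.
move=> r_gt0 r_lt1 z0_gt0; rewrite le_eqVlt => /predU1P[<- _|z_gt0 z_neq].
  have := mulr_powRB1 (ltW z0_gt0) r_gt0; have := powR_gt0 r z0_gt0.
  rewrite powR0 ?gt_eqF //; nra.
have [d d_lt0 E] := powR_tangent_gap r_lt1 z0_gt0 z_gt0 z_neq; nra.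
Qed.

Lemma powR_ge_tangent {r z0 z} : r < 0 -> 0 < z0 -> 0 < z ->
  z0 `^ r + r * z0 `^ (r - 1) * (z - z0) <= z `^ r.
Proof.
move=> r_lt0 z0_gt0 z_gt0; have [->|z_neq] := eqVneq z z0.
  by rewrite subrr mulr0 addr0.
have [d d_lt0 E] := powR_tangent_gap (lt_trans r_lt0 ltr01) z0_gt0 z_gt0 z_neq; nra.
Qed.

End PowerTangents.

Section OneSidedMaximum.
Context {R : realType}.
Implicit Types (g d : R -> R) (x : R).

Lemma slope_ge0_at_left_max g d x : {for x, continuous d} ->
  (\forall t \near x^'-, g t <= g x <= g t + d t * (x - t)) -> 0 <= d x.
Proof.
move=> d_cont near_max; apply: (cvgr_to_ge (cvg_at_left_filter d_cont)).
near=> t; have tx : t < x by near: t; exact: nbhs_left_lt.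
have /andP[] : g t <= g x <= g t + d t * (x - t) by near: t.
nra.
Unshelve. all: end_near. Qed.

Lemma slope_le0_at_right_max g d x : {for x, continuous d} ->
  (\forall t \near x^'+, g t <= g x <= g t + d t * (x - t)) -> d x <= 0.
Proof.
move=> d_cont near_max; apply: (cvgr_to_le (cvg_at_right_filter d_cont)).
near=> t; have xt : x < t by near: t; exact: nbhs_right_gt.
have /andP[] : g t <= g x <= g t + d t * (x - t) by near: t.
nra.
Unshelve. all: end_near. Qed.

End OneSidedMaximum.

Lemma sup_eq_max {R : realType} (S : set R) x : S x -> ubound S x -> sup S = x.
Proof.
move=> Sx ubx; apply/eqP; rewrite eq_le ge_sup //=; last by exists x.
by apply: ub_le_sup => //; exists x.
Qed.

Section Allocations.
Context {R : realType}.

Lemma alloc_feasible_totals {B1 L1 B2 L2} {p : alloc R} : alloc_feasible B1 L1 B2 L2 p ->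
  [/\ 0 <= BM1 p + BM2 p, L1 + L2 <= BS1 p + BS2 p
    & BM1 p + BM2 p + (BS1 p + BS2 p) <= B1 + B2].
Proof. by case=> -[? [? ?]] [? [? ?]]; split; lra. Qed.

(* Any totals X, Y >= L1 + L2 are realized by letting each SP put, besides its
   mandatory Li, the same fraction of its Boi into small cells. *)
Lemma alloc_of_totals {Bo1 L1 Bo2 L2 X Y} : 0 < Bo1 -> 0 < Bo2 -> 0 <= X -> L1 + L2 <= Y ->
  X + Y = Bo1 + Bo2 + (L1 + L2) ->
  exists p : alloc R, [/\ alloc_feasible (Bo1 + L1) L1 (Bo2 + L2) L2 p,
                BM1 p + BM2 p = X & BS1 p + BS2 p = Y].
Proof.
move=> Bo1_gt0 Bo2_gt0 X_ge0 LY XY; set th := (Y - (L1 + L2)) / (Bo1 + Bo2).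
have th_ge0 : 0 <= th by rewrite divr_ge0 ?subr_ge0 // ltW ?addr_gt0.
have th_le1 : th <= 1 by rewrite ler_pdivrMr ?addr_gt0 // mul1r; lra.
have thBo : th * (Bo1 + Bo2) = Y - (L1 + L2) by rewrite divfK // gt_eqF ?addr_gt0.
exists (Alloc ((1 - th) * Bo1) (L1 + th * Bo1) ((1 - th) * Bo2) (L2 + th * Bo2)).
have th1_ge0 : 0 <= 1 - th by rewrite subr_ge0.
have k1 := mulr_ge0 th_ge0 (ltW Bo1_gt0); have k2 := mulr_ge0 th1_ge0 (ltW Bo1_gt0).
have k3 := mulr_ge0 th_ge0 (ltW Bo2_gt0); have k4 := mulr_ge0 th1_ge0 (ltW Bo2_gt0).
clearbody th; split=> /=; [split; split=> /=; [|split| |split] | |]; lra.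
Qed.

End Allocations.

(** * Prices, revenues and welfare *)

Section Market.
Context {R : realType}.
Variables (al R0 : R).
Hypotheses (al_gt0 : 0 < al) (al_lt1 : al < 1) (R0_gt0 : 0 < R0).

(* N users sharing bandwidth X get rate rateM R0 N X at the market-clearing
   price [price N X]; an SP holding x of this bandwidth while its rival holds
   c earns R0 * revenue N c x, whose derivative in x is R0 * mrevenue N c x. *)
Definition price (N X : R) : R := rateM R0 N X `^ (- al).
Definition revenue (N c x : R) : R := x * price N (x + c).
Definition mrevenue (N c x : R) : R := price N (x + c) * (1 - al * x / (x + c)).
Definition welfare (N X : R) : R := N * util al (rateM R0 N X).

Let subr1_al : 1 - al - 1 = - al. Proof. by ring. Qed.
Let al1_gt0 : 0 < 1 - al. Proof. by rewrite subr_gt0. Qed.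
Let al1_lt1 : 1 - al < 1. Proof. by rewrite ltrBlDr ltrDl. Qed.
Let Nal_lt0 : - al < 0. Proof. by rewrite oppr_lt0. Qed.

Lemma mulr_powRN z : 0 <= z -> z * z `^ (- al) = z `^ (1 - al).
Proof.
by move=> z_ge0; rewrite -(mulr_powRB1 z_ge0 al1_gt0) subr1_al.
Qed.

Lemma price_gt0 {N X} : 0 < N -> 0 < X -> 0 < price N X.
Proof. by move=> N_gt0 X_gt0; rewrite powR_gt0 // divr_gt0 ?mulr_gt0. Qed.

Lemma price_ltE N N' X X' : 0 < N -> 0 < N' -> 0 < X -> 0 < X' ->
  (price N X < price N' X') = (X' * N < X * N').
Proof.
move=> N_gt0 N'_gt0 X_gt0 X'_gt0.
rewrite /price ltr_powR_negE ?oppr_lt0 ?divr_gt0 ?mulr_gt0 // /rateM.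
rewrite [X' * R0 / N']mulrAC [X * R0 / N]mulrAC ltr_pM2r //.
by rewrite ltr_pdivrMr // mulrAC ltr_pdivlMr.
Qed.

Lemma price_eqE N N' X X' : 0 < N -> 0 < N' -> 0 < X -> 0 < X' ->
  (price N X == price N' X') = (X' * N == X * N').
Proof.
move=> N_gt0 N'_gt0 X_gt0 X'_gt0.
by rewrite !eq_le !leNgt !price_ltE.
Qed.

Lemma ltr_price {N X X'} : 0 < N -> 0 < X -> X < X' -> price N X' < price N X.
Proof.
move=> N_gt0 X_gt0 XX'.
by rewrite price_ltE ?ltr_pM2r // (lt_trans X_gt0).
Qed.

Lemma ler_price {N X X'} : 0 < N -> 0 < X -> X <= X' -> price N X' <= price N X.
Proof.
move=> N_gt0 X_gt0; rewrite le_eqVlt => /predU1P[-> //|XX'].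
exact/ltW/ltr_price.
Qed.

Lemma priceE N X : 0 < N -> 0 <= X -> price N X = (R0 / N) `^ (- al) * X `^ (- al).
Proof.
move=> N_gt0 X_ge0; rewrite /price /rateM.
have -> : X * R0 / N = R0 / N * X by rewrite [RHS]mulrC mulrA.
by rewrite powRM // divr_ge0 // ltW.
Qed.

Lemma mul_powR_tangent {c x0 x} : 0 <= c -> 0 <= x0 -> 0 < x0 + c -> 0 <= x ->
  x * (x + c) `^ (- al) <=
  x0 * (x0 + c) `^ (- al) + (x0 + c) `^ (- al) * (1 - al * x0 / (x0 + c)) * (x - x0).
Proof.
move=> c_ge0 x0_ge0 z0_gt0 x_ge0; have [->|x_neq] := eqVneq x x0.
  by rewrite subrr mulr0 addr0.
have shift u : 0 <= u + c -> u * (u + c) `^ (- al) = (u + c) `^ (1 - al) - c * (u + c) `^ (- al).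
  by move=> uc_ge0; rewrite -mulr_powRN //; ring.
rewrite shift ?addr_ge0 // shift; last exact: ltW.
set z0 := x0 + c; set z := x + c; set w := z0 `^ (- al).
have z_ge0 : 0 <= z by rewrite /z; lra.
have z_neq : z != z0 by apply: contra x_neq => /eqP; rewrite /z /z0 => ?; apply/eqP; lra.
have concave : z `^ (1 - al) < z0 `^ (1 - al) + (1 - al) * w * (z - z0).
  by have := powR_lt_tangent al1_gt0 al1_lt1 z0_gt0 z_ge0 z_neq; rewrite subr1_al.
have convex : c * (w - al * (w / z0) * (z - z0)) <= c * z `^ (- al).
  have [->|c_neq0] := eqVneq c 0; first by rewrite !mul0r.
  have c_gt0 : 0 < c by rewrite lt_neqAle eq_sym c_neq0.
  have z_gt0 : 0 < z by rewrite /z; lra.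
  apply: ler_wpM2l => //; have := powR_ge_tangent Nal_lt0 z0_gt0 z_gt0.
  by rewrite powRB1 // !mulNr.
have -> : z0 `^ (1 - al) - c * w + w * (1 - al * x0 / z0) * (x - x0) =
    z0 `^ (1 - al) + (1 - al) * w * (z - z0) - c * (w - al * (w / z0) * (z - z0)).
  by rewrite /z /z0; field; rewrite gt_eqF.
lra.
Qed.

Lemma revenue_tangent {N c x0 x} : 0 < N -> 0 <= c -> 0 <= x0 -> 0 < x0 + c -> 0 <= x ->
  revenue N c x <= revenue N c x0 + mrevenue N c x0 * (x - x0).
Proof.
move=> N_gt0 c_ge0 x0_ge0 z0_gt0 x_ge0.
rewrite /revenue /mrevenue !priceE ?addr_ge0 // ?(ltW z0_gt0) //.
have k_gt0 : 0 < (R0 / N) `^ (- al) by rewrite powR_gt0 ?divr_gt0.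
have := mul_powR_tangent c_ge0 x0_ge0 z0_gt0 x_ge0.
nra.
Qed.

Lemma mrevenue_gt0 {N c x} : 0 < N -> 0 <= c -> 0 <= x -> 0 < x + c -> 0 < mrevenue N c x.
Proof.
move=> N_gt0 c_ge0 x_ge0 z_gt0; rewrite mulr_gt0 ?price_gt0 // subr_gt0.
by rewrite -mulrA (le_lt_trans _ al_lt1) // ger_pMr // ler_pdivrMr // mul1r; lra.
Qed.

Lemma ltr_revenue {N c x x'} : 0 < N -> 0 <= c -> 0 <= x -> x < x' ->
  revenue N c x < revenue N c x'.
Proof.
move=> N_gt0 c_ge0 x_ge0 xx'.
have z'_gt0 : 0 < x' + c by lra.
have := revenue_tangent N_gt0 c_ge0 (ltW (le_lt_trans x_ge0 xx')) z'_gt0 x_ge0.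
have := mrevenue_gt0 N_gt0 c_ge0 (ltW (le_lt_trans x_ge0 xx')) z'_gt0; nra.
Qed.

Lemma welfare_tangent {N X0 X} : 0 < N -> 0 < X0 -> 0 <= X ->
  welfare N X <= welfare N X0 + R0 * price N X0 * (X - X0) ?= iff (X == X0).
Proof.
move=> N_gt0 X0_gt0 X_ge0; apply/leifP; have [->|X_neq] := eqVneq X X0.
  by rewrite subrr mulr0 addr0.
rewrite /welfare /util /price; set z0 := rateM R0 N X0; set z := rateM R0 N X.
have z0_gt0 : 0 < z0 by rewrite /z0 /rateM divr_gt0 ?mulr_gt0.
have z_ge0 : 0 <= z by rewrite /z /rateM divr_ge0 ?mulr_ge0 // ltW.
have z_neq : z != z0.
  have k_neq0 : R0 / N != 0 by rewrite gt_eqF ?divr_gt0.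
  by rewrite /z /z0 /rateM -!mulrA (inj_eq (mulIf k_neq0)).
have := powR_lt_tangent al1_gt0 al1_lt1 z0_gt0 z_ge0 z_neq; rewrite subr1_al.
have k_gt0 : 0 < N / (1 - al) by rewrite divr_gt0.
rewrite -(ltr_pM2l k_gt0) => concave.
have -> : R0 * z0 `^ (- al) * (X - X0) = N / (1 - al) * ((1 - al) * z0 `^ (- al) * (z - z0)).
  by rewrite /z /z0 /rateM; field; rewrite !gt_eqF.
rewrite !mulrA -![N * _ / _]mulrAC; lra.
Qed.

Lemma continuous_powR r z : 0 < z -> {for z, continuous (fun y : R => y `^ r)}.
Proof.
move=> z_gt0; apply: differentiable_continuous; apply/derivable1_diffP.
by apply: derivable_powR; rewrite in_itv /= andbT.
Qed.

Lemma continuous_mrevenue N c x : 0 < N -> 0 < x + c ->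
  {for x, continuous (mrevenue N c)}.
Proof.
move=> N_gt0 z_gt0.
have shift_cont : {for x, continuous (fun t : R => t + c)}.
  by apply: cvgD; [exact: cvg_id | exact: cvg_cst].
apply: cvgM.
  apply: (continuous_comp (f := fun t => (t + c) * R0 / N) (g := fun y => y `^ (- al))).
    by apply: cvgM; [apply: cvgM; [exact: shift_cont | exact: cvg_cst] | exact: cvg_cst].
  by apply: continuous_powR; rewrite divr_gt0 ?mulr_gt0.
apply: cvgB; first exact: cvg_cst.
apply: cvgM; first by apply: cvgM; [exact: cvg_cst | exact: cvg_id].
by apply: cvgV; [rewrite gt_eqF | exact: shift_cont].
Qed.

Lemma welfare2_le_opt {NM NS X0 Y0 X Y} : 0 < NM -> 0 < NS -> 0 < X0 -> 0 < Y0 ->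
  0 <= X -> 0 <= Y -> price NM X0 * (X - X0) + price NS Y0 * (Y - Y0) <= 0 ->
  welfare NM X + welfare NS Y <= welfare NM X0 + welfare NS Y0 ?= iff (X == X0) && (Y == Y0).
Proof.
move=> NM_gt0 NS_gt0 X0_gt0 Y0_gt0 X_ge0 Y_ge0 lin_le0.
have tangent := leifD (welfare_tangent NM_gt0 X0_gt0 X_ge0) (welfare_tangent NS_gt0 Y0_gt0 Y_ge0).
apply/leifP; case: ifP => [/andP[/eqP-> /eqP->] // | neq].
apply: lt_le_trans (_ : _ < welfare NM X0 + R0 * price NM X0 * (X - X0)
                         + (welfare NS Y0 + R0 * price NS Y0 * (Y - Y0))) _.
  by rewrite (lt_leif tangent) neq.
have := mulr_ge0_le0 (ltW R0_gt0) lin_le0; lra.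
Qed.

(* The marginal gain, for an SP holding s of the small-cell total Y and m of
   the macro total X, of moving bandwidth from macro to small cells. *)
Definition shift_gain (NM NS X Y s m : R) : R :=
  price NS Y * (1 - al * s / Y) - price NM X * (1 - al * m / X).

Definition best_response (NM NS os om Lb Bi s0 m0 : R) : Prop :=
  player_feasible Bi Lb m0 s0 /\
  forall m s, player_feasible Bi Lb m s ->
    revenue NS os s + revenue NM om m <= revenue NS os s0 + revenue NM om m0.

Lemma shift_gain_sum NM NS X Y s1 m1 s2 m2 : 0 < X -> 0 < Y -> s1 + s2 = Y -> m1 + m2 = X ->
  shift_gain NM NS X Y s1 m1 + shift_gain NM NS X Y s2 m2 = (2 - al) * (price NS Y - price NM X).
Proof.
move=> X_gt0 Y_gt0 sE mE; subst X Y; rewrite /shift_gain; field.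
by rewrite !gt_eqF.
Qed.

Lemma shift_gain_all_macro NM NS X Y s : 0 < X -> 0 < Y -> 0 <= s -> s <= Y ->
  (1 - al) * (price NS Y - price NM X) <= shift_gain NM NS X Y s X.
Proof.
move=> X_gt0 Y_gt0 s_ge0 s_le; rewrite /shift_gain mulfK ?gt_eqF //.
have : price NS Y * (1 - al) <= price NS Y * (1 - al * (s / Y)).
  by rewrite ler_wpM2l ?powR_ge0 // lerD2l lerN2 ger_pMr // ler_pdivrMr // mul1r.
rewrite mulrA; lra.
Qed.

Lemma shift_gain_eq_prices NM NS X Y s m : 0 < X -> 0 < Y -> price NS Y = price NM X ->
  shift_gain NM NS X Y s m = al * price NM X / (X * Y) * (m * Y - s * X).
Proof.
move=> X_gt0 Y_gt0 PQ; rewrite /shift_gain PQ; field.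
by rewrite !gt_eqF.
Qed.

Let shift_gain_complE NM NS X Y s m : 0 < X -> 0 < Y ->
  shift_gain NM NS X Y (Y - s) (X - m) =
  price NS Y * (1 - al + al * (s / Y)) - price NM X * (1 - al + al * (m / X)).
Proof.
move=> X_gt0 Y_gt0; rewrite /shift_gain; field.
by rewrite !gt_eqF.
Qed.

Let weight_gt0 u : 0 <= u -> 0 < 1 - al + al * u.
Proof. by move=> u_ge0; have := mulr_ge0 (ltW al_gt0) u_ge0; have := al_lt1; lra. Qed.

Let ler_weight u v : u <= v -> 1 - al + al * u <= 1 - al + al * v.
Proof. by move=> uv; rewrite lerD2l ler_wpM2l // ltW. Qed.

Lemma shift_gain_compl_lt0 {NM NS X Y s m} : 0 < X -> 0 < Y -> 0 <= s ->
  price NS Y < price NM X -> s * X < m * Y -> shift_gain NM NS X Y (Y - s) (X - m) < 0.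
Proof.
move=> X_gt0 Y_gt0 s_ge0 PQ smXY; rewrite shift_gain_complE //.
have Q_gt0 : 0 < price NM X by apply: le_lt_trans PQ; apply: powR_ge0.
have A_gt0 := weight_gt0 _ (divr_ge0 s_ge0 (ltW Y_gt0)).
have : 1 - al + al * (s / Y) < 1 - al + al * (m / X).
  by rewrite ltrD2l ltr_pM2l // ltr_pdivrMr // mulrAC ltr_pdivlMr.
rewrite -(ltr_pM2l Q_gt0); have := ltr_pM2r A_gt0 (price NS Y) (price NM X); rewrite PQ.
lra.
Qed.

Lemma ltr_shift_gain_compl {NM NS X Y X0 Y0 s m} : 0 < NM -> 0 < NS ->
  0 < X -> X < X0 -> 0 < Y0 -> Y0 < Y -> 0 <= s -> 0 <= m ->
  shift_gain NM NS X Y (Y - s) (X - m) < shift_gain NM NS X0 Y0 (Y0 - s) (X0 - m).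
Proof.
move=> NM_gt0 NS_gt0 X_gt0 XX0 Y0_gt0 Y0Y s_ge0 m_ge0.
have X0_gt0 := lt_trans X_gt0 XX0; have Y_gt0 := lt_trans Y0_gt0 Y0Y.
rewrite !shift_gain_complE //.
have P_lt := ltr_price NS_gt0 Y0_gt0 Y0Y; have Q_lt := ltr_price NM_gt0 X_gt0 XX0.
have P_gt0 := price_gt0 NS_gt0 Y_gt0; have Q0_gt0 := price_gt0 NM_gt0 X0_gt0.
have A_gt0 := weight_gt0 _ (divr_ge0 s_ge0 (ltW Y_gt0)).
have C0_gt0 := weight_gt0 _ (divr_ge0 m_ge0 (ltW X0_gt0)).
have AA0 : 1 - al + al * (s / Y) <= 1 - al + al * (s / Y0).
  by rewrite ler_weight // ler_wpM2l // lef_pV2 ?posrE // ltW.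
have C0C : 1 - al + al * (m / X0) <= 1 - al + al * (m / X).
  by rewrite ler_weight // ler_wpM2l // lef_pV2 ?posrE // ltW.
have : price NS Y * (1 - al + al * (s / Y)) < price NS Y0 * (1 - al + al * (s / Y0)).
  by rewrite (lt_le_trans _ (ler_wpM2l (ltW (lt_trans P_gt0 P_lt)) AA0)) // ltr_pM2r.
have : price NM X0 * (1 - al + al * (m / X0)) < price NM X * (1 - al + al * (m / X)).
  by rewrite (lt_le_trans _ (ler_wpM2l (ltW (lt_trans Q0_gt0 Q_lt)) C0C)) // ltr_pM2r.
lra.
Qed.

(** * Best responses *)

Section BestResponse.
Context {NM NS os om Lb Bi s0 m0 : R}.
Hypotheses (NM_gt0 : 0 < NM) (NS_gt0 : 0 < NS).
Hypotheses (os_ge0 : 0 <= os) (om_ge0 : 0 <= om) (Lb_ge0 : 0 <= Lb).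
Hypothesis br : best_response NM NS os om Lb Bi s0 m0.

Let m0_ge0 : 0 <= m0. Proof. by case: br => -[]. Qed.
Let Lb_le_s0 : Lb <= s0. Proof. by case: br => -[_ []]. Qed.

Let revenue_le t m : Lb <= t -> 0 <= m -> m + t <= Bi ->
  revenue NS os t + revenue NM om m <= revenue NS os s0 + revenue NM om m0.
Proof. by case: br => _ best t_ge m_ge0 le_Bi; apply: best; split. Qed.

Lemma best_response_full : s0 + m0 = Bi.
Proof.
have [lt_Bi|] := ltP (m0 + s0) Bi; last by case: br => -[_ []]; lra.
have lt_m0 : m0 < Bi - s0 by lra.
have := ltr_revenue NM_gt0 om_ge0 m0_ge0 lt_m0.
have le_Bi : Bi - s0 + s0 <= Bi by lra.
have := revenue_le s0 (Bi - s0) Lb_le_s0 (le_trans m0_ge0 (ltW lt_m0)) le_Bi.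
lra.
Qed.

(* Without any opponent macro bandwidth the macro price is unbounded near 0,
   so moving a little bandwidth e out of the small cells pays off. *)
Lemma best_response_macro_pos : om = 0 -> Lb < s0 -> 0 < m0.
Proof.
move=> om0 Lb_s0; rewrite lt_neqAle m0_ge0 andbT eq_sym; apply/negP => /eqP m00.
have s0_Bi : s0 = Bi by have := best_response_full; rewrite m00 addr0.
have z_gt0 : 0 < s0 + os by have := os_ge0; have := Lb_ge0; lra.
pose u := NM * (s0 + os) / NS.
have u_gt0 : 0 < u by rewrite divr_gt0 ?mulr_gt0.
pose e := Num.min ((s0 - Lb) / 2) (u / 2).
have e_gt0 : 0 < e by rewrite lt_min (divr_gt0 u_gt0) // andbT divr_gt0 //; lra.
have e_le : e <= (s0 - Lb) / 2 by rewrite ge_min lexx.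
have e_lt : e * NS < (s0 + os) * NM.
  have : e <= u / 2 by rewrite ge_min lexx orbT.
  rewrite -(ler_pM2r NS_gt0) /u mulrAC divfK ?lt0r_neq0 //.
  by have := mulr_gt0 NM_gt0 z_gt0; lra.
have price_gap : price NS (s0 + os) < price NM e by rewrite price_ltE.
have price_le : price NS (s0 + os) <= price NS (s0 - e + os).
  by apply: ler_price => //; have := os_ge0; have := Lb_ge0; lra.
have Lb_le : Lb <= s0 - e by lra.
have e_le_Bi : e + (s0 - e) <= Bi by lra.
have := revenue_le (s0 - e) e Lb_le (ltW e_gt0) e_le_Bi.
rewrite /revenue om0 m00 !addr0 mul0r addr0.
have : (s0 - e) * price NS (s0 + os) <= (s0 - e) * price NS (s0 - e + os).
  by apply: ler_wpM2l => //; have := Lb_ge0; lra.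
have : e * price NS (s0 + os) < e * price NM e by rewrite ltr_pM2l.
lra.
Qed.

Let m0E : m0 = Bi - s0. Proof. by rewrite -best_response_full addrAC subrr add0r. Qed.

Let line t := revenue NS os t + revenue NM om (Bi - t).
Let slope t := mrevenue NS os t - mrevenue NM om (Bi - t).

Let gain_slope : shift_gain NM NS (m0 + om) (s0 + os) s0 m0 = slope s0.
Proof. by rewrite /slope -m0E. Qed.

Let line_le t : Lb <= t -> t <= Bi -> line t <= line s0.
Proof.
move=> Lb_t t_Bi; rewrite /line -m0E.
by apply: revenue_le => //; [rewrite subr_ge0 | rewrite subrK].
Qed.

Let line_tangent t : 0 < t -> 0 < Bi - t -> line s0 <= line t + slope t * (s0 - t).
Proof.
move=> t_gt0 Bt_gt0; rewrite /line /slope -m0E.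
have s0_ge0 : 0 <= s0 by apply: le_trans Lb_le_s0.
have := revenue_tangent NS_gt0 os_ge0 (ltW t_gt0) (_ : 0 < t + os) s0_ge0.
have := revenue_tangent NM_gt0 om_ge0 (ltW Bt_gt0) (_ : 0 < Bi - t + om) m0_ge0.
rewrite m0E; have := os_ge0; have := om_ge0; lra.
Qed.

Let slope_cont : 0 < s0 + os -> 0 < m0 + om -> {for s0, continuous slope}.
Proof.
move=> z_gt0 zm_gt0; apply: cvgB; first exact: continuous_mrevenue.
apply: (continuous_comp (f := fun t => Bi - t)).
  by apply: cvgB; [exact: cvg_cst | exact: cvg_id].
by apply: continuous_mrevenue => //; move: zm_gt0; rewrite m0E.
Qed.

Lemma best_response_small_gain : Lb < s0 -> 0 < m0 + om ->
  0 <= shift_gain NM NS (m0 + om) (s0 + os) s0 m0.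
Proof.
move=> Lb_s0 zm_gt0; have z_gt0 : 0 < s0 + os by have := os_ge0; have := Lb_ge0; lra.
rewrite gain_slope; apply: (slope_ge0_at_left_max line _ _ (slope_cont z_gt0 zm_gt0)).
near=> t; have Lb_t : Lb < t by near: t; exact: nbhs_left_gt.
have t_s0 : t < s0 by near: t; exact: nbhs_left_lt.
have s0_Bi : s0 <= Bi by have := m0_ge0; rewrite m0E; lra.
have t_gt0 : 0 < t by have := Lb_ge0; lra.
by apply/andP; split; [apply: line_le | apply: line_tangent]; lra.
Unshelve. all: end_near. Qed.

Lemma best_response_macro_gain : 0 < m0 -> 0 < s0 + os ->
  shift_gain NM NS (m0 + om) (s0 + os) s0 m0 <= 0.
Proof.
move=> m0_gt0 z_gt0; have zm_gt0 : 0 < m0 + om by have := om_ge0; lra.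
rewrite gain_slope; apply: (slope_le0_at_right_max line _ _ (slope_cont z_gt0 zm_gt0)).
have s0_Bi : s0 < Bi by move: m0_gt0; rewrite m0E; lra.
near=> t; have s0_t : s0 < t by near: t; exact: nbhs_right_gt.
have t_Bi : t < Bi by near: t; exact: nbhs_right_lt.
have t_gt0 : 0 < t by have := Lb_ge0; have := Lb_le_s0; lra.
by apply/andP; split; [apply: line_le | apply: line_tangent]; have := Lb_le_s0; lra.
Unshelve. all: end_near. Qed.

End BestResponse.

(** * The bandwidth game *)

Section Game.
Variables (lamS Nm Nf Bo1 Bo2 Bn1 Bn2 : R).
Hypotheses (lamS_gt0 : 0 < lamS) (Nm_gt0 : 0 < Nm) (Nf_gt0 : 0 < Nf).
Hypotheses (Bo1_gt0 : 0 < Bo1) (Bo2_gt0 : 0 < Bo2) (Bn1_ge0 : 0 <= Bn1) (Bn2_ge0 : 0 <= Bn2).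
Hypothesis B_gt0 : 0 < Bn1 + Bn2.
Local Notation a := (a_const al lamS Nf).
Local Notation sw X Y := (welfare Nm X + welfare a Y).

Let a_gt0 : 0 < a. Proof. by rewrite mulr_gt0 ?powR_gt0. Qed.

Lemma rateS_ge0 Y : 0 <= Y -> 0 <= rateS R0 lamS Nf Y.
Proof. by move=> Y_ge0; rewrite divr_ge0 ?mulr_ge0 // ltW. Qed.

Lemma rate_small Y : rateM R0 a Y = lamS `^ (- al^-1) * rateS R0 lamS Nf Y.
Proof.
have lamS_neq0 : lamS != 0 by rewrite gt_eqF.
have E : lamS `^ (- al^-1) * lamS = (lamS `^ (al^-1 - 1))^-1.
  rewrite -powRN opprB addrC powRD ?powRr1 ?ltW //.
  by apply/implyP => _.
rewrite /rateM /rateS /a_const invfM -E; field.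
by rewrite gt_eqF.
Qed.

Lemma price_small Y : 0 <= Y -> lamS * rateS R0 lamS Nf Y `^ (- al) = price a Y.
Proof.
move=> Y_ge0; rewrite /price rate_small powRM ?powR_ge0 ?rateS_ge0 //.
by rewrite -powRrM mulrNN mulVf ?gt_eqF // powRr1 // ltW.
Qed.

Lemma welfare_small Y : 0 <= Y -> Nf * util al (rateS R0 lamS Nf Y) = welfare a Y.
Proof.
move=> Y_ge0; rewrite /welfare /util rate_small powRM ?powR_ge0 ?rateS_ge0 //.
rewrite /a_const -powRrM !mulrA -[in RHS](mulrA Nf) -powRD; last first.
  by apply/implyP => _; rewrite gt_eqF.
have -> : al^-1 - 1 + - al^-1 * (1 - al) = 0 by field; rewrite gt_eqF.
by rewrite powRr0 mulr1.
Qed.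

Lemma SW_sw p : 0 <= BS1 p + BS2 p ->
  SW al R0 lamS Nm Nf p = sw (BM1 p + BM2 p) (BS1 p + BS2 p).
Proof. by move=> Y_ge0; rewrite /SW /RS_of welfare_small. Qed.

Lemma payoff1E m1 s1 m2 s2 : 0 <= s1 + s2 ->
  payoff1 al R0 lamS Nm Nf (Alloc m1 s1 m2 s2) = R0 * (revenue a s2 s1 + revenue Nm m2 m1).
Proof.
move=> Y_ge0; rewrite /payoff1 /revenue -price_small //.
by rewrite /price /RS_of /RM_of /=; ring.
Qed.

Lemma payoff2E m1 s1 m2 s2 : 0 <= s1 + s2 ->
  payoff2 al R0 lamS Nm Nf (Alloc m1 s1 m2 s2) = R0 * (revenue a s1 s2 + revenue Nm m1 m2).
Proof.
move=> Y_ge0; rewrite /payoff2 /revenue [s2 + _]addrC [m2 + _]addrC -price_small //.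
by rewrite /price /RS_of /RM_of /=; ring.
Qed.

Let Bt := Bo1 + Bo2 + (Bn1 + Bn2).
Let Xs := Nm * Bt / (Nm + a).
Let Ys := a * Bt / (Nm + a).

Let Bt_gt0 : 0 < Bt. Proof. exact: addr_gt0 (addr_gt0 Bo1_gt0 Bo2_gt0) B_gt0. Qed.
Let Nma_gt0 : 0 < Nm + a. Proof. exact: addr_gt0. Qed.
Let Xs_gt0 : 0 < Xs. Proof. exact: divr_gt0 (mulr_gt0 Nm_gt0 Bt_gt0) Nma_gt0. Qed.
Let Ys_gt0 : 0 < Ys. Proof. exact: divr_gt0 (mulr_gt0 a_gt0 Bt_gt0) Nma_gt0. Qed.
Let XsYs : Xs + Ys = Bt. Proof. by rewrite /Xs /Ys; field; rewrite gt_eqF. Qed.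
Let Xs_a : Xs * a = Ys * Nm. Proof. by rewrite /Xs /Ys; field; rewrite gt_eqF. Qed.
Let price_opt : price a Ys = price Nm Xs. Proof. by apply/eqP; rewrite price_eqE // Xs_a. Qed.

Let Ys_ltE : (Ys < Bn1 + Bn2) = (a * (Bo1 + Bo2) < Nm * (Bn1 + Bn2)).
Proof.
by rewrite /Ys ltr_pdivrMr // /Bt; apply/idP/idP; lra.
Qed.

Lemma SW_le_opt {L1 L2 X0 Y0 p} : 0 <= L1 -> 0 <= L2 -> 0 < X0 -> 0 < Y0 ->
  (forall X Y, 0 <= X -> L1 + L2 <= Y -> X + Y <= Bt ->
     price Nm X0 * (X - X0) + price a Y0 * (Y - Y0) <= 0) ->
  alloc_feasible (Bo1 + Bn1) L1 (Bo2 + Bn2) L2 p ->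
  SW al R0 lamS Nm Nf p <= sw X0 Y0 ?= iff (BM1 p + BM2 p == X0) && (BS1 p + BS2 p == Y0).
Proof.
move=> L1_ge0 L2_ge0 X0_gt0 Y0_gt0 lin fp; have [X_ge0 LY XY] := alloc_feasible_totals fp.
have Y_ge0 := le_trans (addr_ge0 L1_ge0 L2_ge0) LY.
rewrite SW_sw //; apply: welfare2_le_opt => //; apply: lin => //.
by move: XY; rewrite /Bt; lra.
Qed.

Lemma sup_SW L1 L2 X0 Y0 : 0 <= L1 -> 0 <= L2 -> 0 < X0 -> 0 < Y0 ->
  (forall X Y, 0 <= X -> L1 + L2 <= Y -> X + Y <= Bt ->
     price Nm X0 * (X - X0) + price a Y0 * (Y - Y0) <= 0) ->
  (exists p, [/\ alloc_feasible (Bo1 + Bn1) L1 (Bo2 + Bn2) L2 p,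
                 BM1 p + BM2 p = X0 & BS1 p + BS2 p = Y0]) ->
  sup [set x | exists p, alloc_feasible (Bo1 + Bn1) L1 (Bo2 + Bn2) L2 p /\
                         SW al R0 lamS Nm Nf p = x] = sw X0 Y0.
Proof.
move=> L1_ge0 L2_ge0 X0_gt0 Y0_gt0 lin [p0 [fp0 X0E Y0E]]; apply: sup_eq_max.
  have Y_ge0 : 0 <= BS1 p0 + BS2 p0 by rewrite Y0E ltW.
  by exists p0; split; rewrite // SW_sw // X0E Y0E.
by move=> _ [p [fp <-]]; apply: (SW_le_opt L1_ge0 L2_ge0 X0_gt0 Y0_gt0 lin fp).1.
Qed.

Section Equilibrium.
Variables (m1 s1 m2 s2 : R).
Hypothesis NE : is_NE_w al R0 lamS Nm Nf Bo1 Bo2 Bn1 Bn2 (Alloc m1 s1 m2 s2).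
Local Notation X := (m1 + m2).
Local Notation Y := (s1 + s2).

Lemma NE_feasible : [/\ 0 <= m1, Bn1 <= s1, 0 <= m2 & Bn2 <= s2].
Proof. by case: NE => -[[? [? _]] [? [? _]]]. Qed.

Lemma NE_best_responses :
  best_response Nm a s2 m2 Bn1 (Bo1 + Bn1) s1 m1 /\ best_response Nm a s1 m1 Bn2 (Bo2 + Bn2) s2 m2.
Proof.
have [m1_ge0 Bn1_s1 m2_ge0 Bn2_s2] := NE_feasible.
have s1_ge0 := le_trans Bn1_ge0 Bn1_s1; have s2_ge0 := le_trans Bn2_ge0 Bn2_s2.
case: NE => -[f1 f2] [best1 best2]; split; split=> // m s fs; have [_ [Bn_s _]] := fs.
- move: (best1 m s fs).
  by rewrite !payoff1E ?addr_ge0 ?(le_trans Bn1_ge0 Bn_s) // ler_pM2l.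
- move: (best2 m s fs).
  by rewrite !payoff2E ?addr_ge0 ?(le_trans Bn2_ge0 Bn_s) // ler_pM2l.
Qed.

Lemma NE_full : s1 + m1 = Bo1 + Bn1 /\ s2 + m2 = Bo2 + Bn2.
Proof.
have [m1_ge0 _ m2_ge0 _] := NE_feasible; have [br1 br2] := NE_best_responses.
by split; [apply: best_response_full br1 | apply: best_response_full br2].
Qed.

Lemma NE_macro_pos : 0 < X.
Proof.
have [m1_ge0 Bn1_s1 m2_ge0 Bn2_s2] := NE_feasible.
have [[br1 _] [full1 _]] := (NE_best_responses, NE_full).
rewrite lt_neqAle addr_ge0 // andbT eq_sym; apply/negP => /eqP X0.
have m2_0 : m2 = 0 by lra.
have Bn1_lt : Bn1 < s1 by have := Bo1_gt0; lra.
have := best_response_macro_pos Nm_gt0 a_gt0 (le_trans Bn2_ge0 Bn2_s2) m2_ge0 Bn1_ge0 br1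
  m2_0 Bn1_lt.
lra.
Qed.

Let Y_gt0 : 0 < Y.
Proof.
have [_ Bn1_s1 _ Bn2_s2] := NE_feasible; apply: lt_le_trans B_gt0 _.
exact: lerD.
Qed.

Local Notation kkt Lb s m :=
  ((Lb < s -> 0 <= shift_gain Nm a X Y s m) /\ (0 < m -> shift_gain Nm a X Y s m <= 0)).

Lemma NE_kkt : kkt Bn1 s1 m1 /\ kkt Bn2 s2 m2.
Proof.
have [m1_ge0 Bn1_s1 m2_ge0 Bn2_s2] := NE_feasible; have [br1 br2] := NE_best_responses.
have s1_ge0 := le_trans Bn1_ge0 Bn1_s1; have s2_ge0 := le_trans Bn2_ge0 Bn2_s2.
have X_gt0 := NE_macro_pos; have X_gt0' : 0 < m2 + m1 by rewrite addrC.
have Y_gt0' : 0 < s2 + s1 by rewrite addrC.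
split; split=> h.
- exact: best_response_small_gain Nm_gt0 a_gt0 s2_ge0 m2_ge0 Bn1_ge0 br1 h X_gt0.
- exact: best_response_macro_gain Nm_gt0 a_gt0 s2_ge0 m2_ge0 Bn1_ge0 br1 h Y_gt0.
- rewrite [X]addrC [Y]addrC.
  exact: best_response_small_gain Nm_gt0 a_gt0 s1_ge0 m1_ge0 Bn2_ge0 br2 h X_gt0'.
- rewrite [X]addrC [Y]addrC.
  exact: best_response_macro_gain Nm_gt0 a_gt0 s1_ge0 m1_ge0 Bn2_ge0 br2 h Y_gt0'.
Qed.

(* A player with no macro bandwidth leaves the whole macro market to the other
   one, whose marginal macro revenue is then at its lowest, (1 - al) times the
   macro price; so small cells can never be worth more than macro cells. *)
Lemma NE_price_le : price a Y <= price Nm X.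
Proof.
have [m1_ge0 Bn1_s1 m2_ge0 Bn2_s2] := NE_feasible; have [[_ kkt1] [_ kkt2]] := NE_kkt.
have s1_ge0 := le_trans Bn1_ge0 Bn1_s1; have s2_ge0 := le_trans Bn2_ge0 Bn2_s2.
have X_gt0 := NE_macro_pos; rewrite leNgt; apply/negP => QP.
have gain_le0 s m s' m' : s + s' = Y -> m + m' = X -> 0 <= s -> 0 <= m -> 0 <= s' ->
    (0 < m -> shift_gain Nm a X Y s m <= 0) -> (0 < m' -> shift_gain Nm a X Y s' m' <= 0) ->
    shift_gain Nm a X Y s m <= 0.
  move=> sY mX s_ge0 m_ge0 s'_ge0 kkt kkt'; have [/kkt //|m_le0] := ltP 0 m.
  have m'X : m' = X by lra.
  have s'_le : s' <= Y by lra.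
  have := shift_gain_all_macro Nm a X Y s' X_gt0 Y_gt0 s'_ge0 s'_le.
  have := kkt'; rewrite m'X => /(_ X_gt0).
  have : 0 < (1 - al) * (price a Y - price Nm X) by rewrite mulr_gt0 // subr_gt0.
  lra.
have gain_pos : 0 < shift_gain Nm a X Y s1 m1 + shift_gain Nm a X Y s2 m2.
  rewrite (shift_gain_sum Nm a X Y s1 m1 s2 m2 X_gt0 Y_gt0 erefl erefl).
  by rewrite mulr_gt0 ?subr_gt0 // (lt_trans al_lt1) // ltr1n.
have := gain_le0 s1 m1 s2 m2 erefl erefl s1_ge0 m1_ge0 s2_ge0 kkt1 kkt2.
have := gain_le0 s2 m2 s1 m1 (addrC _ _) (addrC _ _) s2_ge0 m2_ge0 s1_ge0 kkt2 kkt1.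
lra.
Qed.

(* If small cells are worth less than macro cells, some player sits at its
   regulatory corner (B_i^n, B_i^o), and the other one still wants more small
   cells. *)
Lemma NE_some_corner : price a Y < price Nm X -> Bn1 + Bn2 < Y ->
  0 <= shift_gain Nm a X Y (Y - Bn1) (X - Bo1) \/ 0 <= shift_gain Nm a X Y (Y - Bn2) (X - Bo2).
Proof.
move=> PQ BY; have [[kkt1 _] [kkt2 _]] := NE_kkt; have [full1 full2] := NE_full.
have [_ Bn1_s1 _ Bn2_s2] := NE_feasible; have X_gt0 := NE_macro_pos.
have corner s m s' m' Lb Bo Lb' : s + s' = Y -> m + m' = X -> s + m = Bo + Lb ->
    Lb + Lb' < Y -> Lb <= s -> (Lb < s -> 0 <= shift_gain Nm a X Y s m) ->
    (Lb' < s' -> 0 <= shift_gain Nm a X Y s' m') -> shift_gain Nm a X Y s m < 0 ->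
    0 <= shift_gain Nm a X Y (Y - Lb) (X - Bo).
  move=> sY mX full LbY Lb_s kkt kkt' gain_lt0.
  have sLb : s = Lb by have [/kkt|] := ltP Lb s; lra.
  have -> : Y - Lb = s' by lra.
  have -> : X - Bo = m' by lra.
  by apply: kkt'; lra.
have sum := shift_gain_sum Nm a X Y s1 m1 s2 m2 X_gt0 Y_gt0 erefl erefl.
have sum_lt0 : (2 - al) * (price a Y - price Nm X) < 0.
  by rewrite pmulr_rlt0 ?subr_lt0 // subr_gt0 (lt_trans al_lt1) // ltr1n.
have [g1_lt0|g1_ge0] := ltP (shift_gain Nm a X Y s1 m1) 0.
  by left; apply: (corner s1 m1 s2 m2 Bn1 Bo1 Bn2).
have g2_lt0 : shift_gain Nm a X Y s2 m2 < 0 by lra.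
right; apply: (corner s2 m2 s1 m1 Bn2 Bo2 Bn1 (addrC _ _) (addrC _ _)) => //.
by rewrite addrC.
Qed.

Lemma NE_gain_at_corner : X = Bo1 + Bo2 -> Y = Bn1 + Bn2 ->
  shift_gain Nm a X Y Bn1 Bo1 <= 0 /\ shift_gain Nm a X Y Bn2 Bo2 <= 0.
Proof.
move=> XBo YB; have [[_ kkt1] [_ kkt2]] := NE_kkt; have [full1 full2] := NE_full.
have [_ Bn1_s1 _ Bn2_s2] := NE_feasible.
have s1E : s1 = Bn1 by lra.
have s2E : s2 = Bn2 by lra.
have m1E : m1 = Bo1 by lra.
have m2E : m2 = Bo2 by lra.
split; [rewrite -{1}s1E -{1}m1E; apply: kkt1 | rewrite -{1}s2E -{1}m2E; apply: kkt2].
- by rewrite m1E.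
- by rewrite m2E.
Qed.

(* With equal prices the gain of a player only compares its macro/small ratio
   with the market's; since no player is above the market ratio, both are at it. *)
Lemma NE_equal_prices : price a Y = price Nm X -> Bn1 * X <= Bo1 * Y /\ Bn2 * X <= Bo2 * Y.
Proof.
move=> PQ; have [[_ kkt1] [_ kkt2]] := NE_kkt; have [full1 full2] := NE_full.
have [m1_ge0 Bn1_s1 m2_ge0 Bn2_s2] := NE_feasible; have X_gt0 := NE_macro_pos.
have ratio_le s m : 0 <= s -> 0 <= m -> (0 < m -> shift_gain Nm a X Y s m <= 0) -> m * Y <= s * X.
  move=> s_ge0 m_ge0 kkt; have [m_gt0|m_le0] := ltP 0 m; last first.
    have -> : m = 0 by lra.
    by rewrite mul0r mulr_ge0 // ltW.
  move: (kkt m_gt0); rewrite shift_gain_eq_prices // pmulr_rle0 ?subr_le0 //.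
  by rewrite divr_gt0 ?mulr_gt0 ?price_gt0.
have le1 := ratio_le s1 m1 (le_trans Bn1_ge0 Bn1_s1) m1_ge0 kkt1.
have le2 := ratio_le s2 m2 (le_trans Bn2_ge0 Bn2_s2) m2_ge0 kkt2.
have eq1 : m1 * Y = s1 * X by lra.
have eq2 : m2 * Y = s2 * X by lra.
have m1_le : m1 <= Bo1 by lra.
have m2_le : m2 <= Bo2 by lra.
have := ler_wpM2r (ltW X_gt0) Bn1_s1; have := ler_wpM2r (ltW Y_gt0) m1_le.
have := ler_wpM2r (ltW X_gt0) Bn2_s2; have := ler_wpM2r (ltW Y_gt0) m2_le.
lra.
Qed.

Let NE_totals : X + Y = Bo1 + Bo2 + (Bn1 + Bn2).
Proof. by have [full1 full2] := NE_full; lra. Qed.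

Lemma NE_corner_iff : a * (Bo1 + Bo2) < Nm * (Bn1 + Bn2) ->
  X = Bo1 + Bo2 /\ Y = Bn1 + Bn2 <->
  shift_gain Nm a (Bo1 + Bo2) (Bn1 + Bn2) Bn1 Bo1 <= 0 /\
  shift_gain Nm a (Bo1 + Bo2) (Bn1 + Bn2) Bn2 Bo2 <= 0.
Proof.
move=> binding; split=> [[XE YE]|[c1 c2]]; first by rewrite -XE -YE; exact: NE_gain_at_corner.
have [_ Bn1_s1 _ Bn2_s2] := NE_feasible; have X_gt0 := NE_macro_pos; have XY := NE_totals.
have [BY|] := ltP (Bn1 + Bn2) Y; last by split; lra.
have XBo : X < Bo1 + Bo2 by lra.
have Bo_gt0 := addr_gt0 Bo1_gt0 Bo2_gt0.
have PQ : price a Y < price Nm X.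
  rewrite (lt_trans (ltr_price a_gt0 B_gt0 BY)) // (lt_trans _ (ltr_price Nm_gt0 X_gt0 XBo)) //.
  by rewrite price_ltE // [_ * a]mulrC [_ * Nm]mulrC.
have Bn1E : Bn1 + Bn2 - Bn1 = Bn2 by ring.
have Bn2E : Bn1 + Bn2 - Bn2 = Bn1 by ring.
have Bo1E : Bo1 + Bo2 - Bo1 = Bo2 by ring.
have Bo2E : Bo1 + Bo2 - Bo2 = Bo1 by ring.
have [h|h] := NE_some_corner PQ BY.
- have := ltr_shift_gain_compl Nm_gt0 a_gt0 X_gt0 XBo B_gt0 BY Bn1_ge0 (ltW Bo1_gt0).
  by rewrite Bn1E Bo1E; lra.
- have := ltr_shift_gain_compl Nm_gt0 a_gt0 X_gt0 XBo B_gt0 BY Bn2_ge0 (ltW Bo2_gt0).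
  by rewrite Bn2E Bo2E; lra.
Qed.

Lemma NE_interior_iff : Nm * (Bn1 + Bn2) <= a * (Bo1 + Bo2) ->
  X * a = Y * Nm <-> Bn1 * Nm <= Bo1 * a /\ Bn2 * Nm <= Bo2 * a.
Proof.
have X_gt0 := NE_macro_pos; have XY := NE_totals.
move=> slack; split=> [XYa | [c1 c2]].
  have PQ : price a Y = price Nm X by apply/eqP; rewrite price_eqE // XYa.
  have [le1 le2] := NE_equal_prices PQ.
  have key Bn Bo : Bn * X <= Bo * Y -> Bn * Nm <= Bo * a.
    move=> le; rewrite -(ler_pM2r Y_gt0).
    have -> : Bn * Nm * Y = a * (Bn * X) by rewrite mulrAC -mulrA -XYa; ring.
    have -> : Bo * a * Y = a * (Bo * Y) by ring.
    by rewrite ler_pM2l.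
  by split; apply: key.
apply/eqP; rewrite -price_eqE // eq_le NE_price_le /= leNgt; apply/negP => PQ.
have XaY : X * a < Y * Nm by rewrite -price_ltE.
have BY : Bn1 + Bn2 < Y.
  have aXY : a * X + a * Y = a * (Bo1 + Bo2) + a * (Bn1 + Bn2) by rewrite -!mulrDr XY.
  rewrite -(ltr_pM2l Nma_gt0); lra.
have strict Bn Bo : 0 < Bo -> Bn * Nm <= Bo * a -> Bn * X < Bo * Y.
  move=> Bo_gt0 c; rewrite -(ltr_pM2l Nm_gt0).
  have := ler_wpM2r (ltW X_gt0) c; have : Bo * (X * a) < Bo * (Y * Nm) by rewrite ltr_pM2l.
  lra.
have [h|h] := NE_some_corner PQ BY.
- by have := shift_gain_compl_lt0 X_gt0 Y_gt0 Bn1_ge0 PQ (strict _ _ Bo1_gt0 c1); lra.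
- by have := shift_gain_compl_lt0 X_gt0 Y_gt0 Bn2_ge0 PQ (strict _ _ Bo2_gt0 c2); lra.
Qed.

End Equilibrium.

Let opt_linear X Y : X + Y <= Bt -> price Nm Xs * (X - Xs) + price a Ys * (Y - Ys) <= 0.
Proof.
move=> XY; rewrite price_opt -mulrDr mulr_ge0_le0 ?powR_ge0 //.
by have := XsYs; lra.
Qed.

Let corner_linear : a * (Bo1 + Bo2) < Nm * (Bn1 + Bn2) -> forall X Y,
  0 <= X -> Bn1 + Bn2 <= Y -> X + Y <= Bt ->
  price Nm (Bo1 + Bo2) * (X - (Bo1 + Bo2)) + price a (Bn1 + Bn2) * (Y - (Bn1 + Bn2)) <= 0.
Proof.
move=> binding X Y _ BY XY; have Bo_gt0 := addr_gt0 Bo1_gt0 Bo2_gt0.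
have PQ : price a (Bn1 + Bn2) < price Nm (Bo1 + Bo2).
  by rewrite price_ltE // [_ * a]mulrC [_ * Nm]mulrC.
have : price a (Bn1 + Bn2) * (Y - (Bn1 + Bn2)) <= price Nm (Bo1 + Bo2) * (Y - (Bn1 + Bn2)).
  by rewrite ler_wpM2r ?subr_ge0 // ltW.
have : price Nm (Bo1 + Bo2) * (X + Y - Bt) <= 0 by rewrite mulr_ge0_le0 ?powR_ge0 ?subr_le0.
by rewrite /Bt; lra.
Qed.

Lemma SW_wo_optE : SW_wo_opt al R0 lamS Nm Nf Bo1 Bo2 Bn1 Bn2 = sw Xs Ys.
Proof.
apply: sup_SW (lexx 0) (lexx 0) Xs_gt0 Ys_gt0 (fun X Y _ _ => opt_linear X Y) _.
have Bo1'_gt0 : 0 < Bo1 + Bn1 by rewrite ltr_wpDr.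
have Bo2'_gt0 : 0 < Bo2 + Bn2 by rewrite ltr_wpDr.
have LY : 0 + 0 <= Ys by rewrite addr0 ltW.
have XY : Xs + Ys = Bo1 + Bn1 + (Bo2 + Bn2) + (0 + 0) by rewrite addr0 XsYs /Bt; ring.
have [p [fp <- <-]] := alloc_of_totals Bo1'_gt0 Bo2'_gt0 (ltW Xs_gt0) LY XY.
by rewrite !addr0 in fp; exists p.
Qed.

Let Bo_gt0 : 0 < Bo1 + Bo2. Proof. exact: addr_gt0. Qed.

Lemma SW_w_optE_corner : a * (Bo1 + Bo2) < Nm * (Bn1 + Bn2) ->
  SW_w_opt al R0 lamS Nm Nf Bo1 Bo2 Bn1 Bn2 = sw (Bo1 + Bo2) (Bn1 + Bn2).
Proof.
move=> binding; apply: sup_SW Bn1_ge0 Bn2_ge0 Bo_gt0 B_gt0 (corner_linear binding) _.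
exists (Alloc Bo1 Bn1 Bo2 Bn2); split=> //.
by split; split=> //=; rewrite ltW // lexx addrC lexx.
Qed.

Lemma SW_w_optE_interior : Nm * (Bn1 + Bn2) <= a * (Bo1 + Bo2) ->
  SW_w_opt al R0 lamS Nm Nf Bo1 Bo2 Bn1 Bn2 = sw Xs Ys.
Proof.
move=> slack; apply: sup_SW Bn1_ge0 Bn2_ge0 Xs_gt0 Ys_gt0 (fun X Y _ _ => opt_linear X Y) _.
have BYs : Bn1 + Bn2 <= Ys by rewrite leNgt Ys_ltE -leNgt.
have [p [fp <- <-]] := alloc_of_totals Bo1_gt0 Bo2_gt0 (ltW Xs_gt0) BYs XsYs.
by exists p.
Qed.

Lemma T_thr_ltE : (T_thr al lamS Nm Nf Bo1 Bo2 < Bn1 + Bn2) = (a * (Bo1 + Bo2) < Nm * (Bn1 + Bn2)).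
Proof. by rewrite /T_thr ltr_pdivrMr // mulrC [_ * Nm]mulrC. Qed.

Lemma cond_iE Bni Boi : cond_i al R0 lamS Nm Nf Bo1 Bo2 Bn1 Bn2 Bni Boi =
  (shift_gain Nm a (Bo1 + Bo2) (Bn1 + Bn2) Bni Boi <= 0).
Proof.
rewrite /cond_i /shift_gain -price_small ?(ltW B_gt0) // /price /RS0 /RM0 /rateS /rateM.
rewrite !powRB1 ?divr_gt0 ?mulr_gt0 //; congr (_ <= 0); field.
by rewrite !gt_eqF.
Qed.

Let opt_totals X Y : X + Y = Bt -> X * a = Y * Nm -> X = Xs /\ Y = Ys.
Proof.
move=> XY XaY; have XE : X = Xs.
  rewrite /Xs -XY; apply: (mulIf (lt0r_neq0 Nma_gt0)).
  by rewrite divfK ?lt0r_neq0 // mulrDr XaY; ring.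
by split=> //; have := XsYs; lra.
Qed.

Lemma regulation_binding : T_thr al lamS Nm Nf Bo1 Bo2 < Bn1 + Bn2 ->
  SW_w_opt al R0 lamS Nm Nf Bo1 Bo2 Bn1 Bn2 < SW_wo_opt al R0 lamS Nm Nf Bo1 Bo2 Bn1 Bn2 /\
  forall p : alloc R, is_NE_w al R0 lamS Nm Nf Bo1 Bo2 Bn1 Bn2 p ->
    SW al R0 lamS Nm Nf p <= SW_w_opt al R0 lamS Nm Nf Bo1 Bo2 Bn1 Bn2 /\
    (SW al R0 lamS Nm Nf p = SW_w_opt al R0 lamS Nm Nf Bo1 Bo2 Bn1 Bn2 <->
       cond_i al R0 lamS Nm Nf Bo1 Bo2 Bn1 Bn2 Bn1 Bo1 /\
       cond_i al R0 lamS Nm Nf Bo1 Bo2 Bn1 Bn2 Bn2 Bo2).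
Proof.
rewrite T_thr_ltE => binding; rewrite SW_w_optE_corner // SW_wo_optE; split.
  have opt_le := welfare2_le_opt Nm_gt0 a_gt0 Xs_gt0 Ys_gt0 (ltW Bo_gt0) (ltW B_gt0)
    (opt_linear _ _ (lexx Bt)).
  have YsB : Ys < Bn1 + Bn2 by rewrite Ys_ltE.
  by rewrite (lt_leif opt_le) negb_and (gt_eqF YsB) orbT.
move=> [m1 s1 m2 s2] NE.
have opt_le := SW_le_opt Bn1_ge0 Bn2_ge0 Bo_gt0 B_gt0 (corner_linear binding) NE.1.
split; first exact: opt_le.1.
rewrite 2!cond_iE -(NE_corner_iff _ _ _ _ NE binding).
split=> [/eqP | [XE YE]]; first by rewrite opt_le.2 /= => /andP[/eqP-> /eqP->].
by apply/eqP; rewrite opt_le.2 /= XE YE !eqxx.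
Qed.

Lemma regulation_slack : Bn1 + Bn2 <= T_thr al lamS Nm Nf Bo1 Bo2 ->
  SW_w_opt al R0 lamS Nm Nf Bo1 Bo2 Bn1 Bn2 = SW_wo_opt al R0 lamS Nm Nf Bo1 Bo2 Bn1 Bn2 /\
  forall p : alloc R, is_NE_w al R0 lamS Nm Nf Bo1 Bo2 Bn1 Bn2 p ->
    SW al R0 lamS Nm Nf p <= SW_w_opt al R0 lamS Nm Nf Bo1 Bo2 Bn1 Bn2 /\
    (SW al R0 lamS Nm Nf p = SW_w_opt al R0 lamS Nm Nf Bo1 Bo2 Bn1 Bn2 /\
     SW_w_opt al R0 lamS Nm Nf Bo1 Bo2 Bn1 Bn2 = SW_wo_opt al R0 lamS Nm Nf Bo1 Bo2 Bn1 Bn2 <->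
       Bn1 + Bn2 - Bo2 * a / Nm <= Bn1 /\ Bn1 <= Bo1 * a / Nm /\ Bn2 = Bn1 + Bn2 - Bn1).
Proof.
rewrite leNgt T_thr_ltE -leNgt => slack; rewrite SW_w_optE_interior // SW_wo_optE; split=> //.
move=> [m1 s1 m2 s2] NE.
have opt_le := SW_le_opt Bn1_ge0 Bn2_ge0 Xs_gt0 Ys_gt0 (fun X Y _ _ => opt_linear X Y) NE.1.
split; first exact: opt_le.1.
have interval : Bn1 + Bn2 - Bo2 * a / Nm <= Bn1 /\ Bn1 <= Bo1 * a / Nm /\ Bn2 = Bn1 + Bn2 - Bn1 <->
    Bn1 * Nm <= Bo1 * a /\ Bn2 * Nm <= Bo2 * a.
  rewrite -!ler_pdivlMr //; split=> [[? [? _]] | [? ?]]; split; lra.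
rewrite interval -(NE_interior_iff _ _ _ _ NE slack) /=.
have [full1 full2] := NE_full _ _ _ _ NE.
split=> [[/eqP] | XaY]; first by rewrite opt_le.2 /= => /andP[/eqP-> /eqP->].
have XY : m1 + m2 + (s1 + s2) = Bt by rewrite /Bt; lra.
have [XE YE] := opt_totals _ _ XY XaY.
by split=> //; apply/eqP; rewrite opt_le.2 /= XE YE !eqxx.
Qed.

End Game.

End Market.


Theorem theorem4 (R : realType) (al R0 lamS Nm Nf Bo1 Bo2 Bn1 Bn2 B : R) :
  0 < al -> al < 1 -> 0 < R0 -> 1 < lamS -> 0 < Nm -> 0 < Nf ->
  0 < Bo1 -> 0 < Bo2 -> 0 < B -> 0 <= Bn1 -> 0 <= Bn2 -> Bn1 + Bn2 = B ->
  (T_thr al lamS Nm Nf Bo1 Bo2 < B ->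
     SW_w_opt al R0 lamS Nm Nf Bo1 Bo2 Bn1 Bn2
       < SW_wo_opt al R0 lamS Nm Nf Bo1 Bo2 Bn1 Bn2 /\
     forall p : alloc R, is_NE_w al R0 lamS Nm Nf Bo1 Bo2 Bn1 Bn2 p ->
       SW al R0 lamS Nm Nf p <= SW_w_opt al R0 lamS Nm Nf Bo1 Bo2 Bn1 Bn2 /\
       (SW al R0 lamS Nm Nf p = SW_w_opt al R0 lamS Nm Nf Bo1 Bo2 Bn1 Bn2 <->
          cond_i al R0 lamS Nm Nf Bo1 Bo2 Bn1 Bn2 Bn1 Bo1 /\
          cond_i al R0 lamS Nm Nf Bo1 Bo2 Bn1 Bn2 Bn2 Bo2)) /\
  (B <= T_thr al lamS Nm Nf Bo1 Bo2 ->
     SW_w_opt al R0 lamS Nm Nf Bo1 Bo2 Bn1 Bn2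
       = SW_wo_opt al R0 lamS Nm Nf Bo1 Bo2 Bn1 Bn2 /\
     forall p : alloc R, is_NE_w al R0 lamS Nm Nf Bo1 Bo2 Bn1 Bn2 p ->
       SW al R0 lamS Nm Nf p <= SW_w_opt al R0 lamS Nm Nf Bo1 Bo2 Bn1 Bn2 /\
       (SW al R0 lamS Nm Nf p = SW_w_opt al R0 lamS Nm Nf Bo1 Bo2 Bn1 Bn2 /\
        SW_w_opt al R0 lamS Nm Nf Bo1 Bo2 Bn1 Bn2
          = SW_wo_opt al R0 lamS Nm Nf Bo1 Bo2 Bn1 Bn2 <->
          (B - Bo2 * a_const al lamS Nf / Nm <= Bn1 /\
           Bn1 <= Bo1 * a_const al lamS Nf / Nm /\ Bn2 = B - Bn1))).
Proof.
move=> al_gt0 al_lt1 R0_gt0 lamS_gt1 Nm_gt0 Nf_gt0 Bo1_gt0 Bo2_gt0 B_gt0 Bn1_ge0 Bn2_ge0 BE.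
have lamS_gt0 : 0 < lamS := lt_trans ltr01 lamS_gt1.
subst B; split; [exact: regulation_binding | exact: regulation_slack].
Qed.
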